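(* For every $n\ge 2$, every symmetric pseudo-Boolean function of $n$ variables has a $y$-linear quadratization involving at most $n-2$ auxiliary variables.
   Context: A pseudo-Boolean function is a map $f:\{0,1\}^n\to\mathbb{R}$; it is symmetric if its value depends only on the Hamming weight $\sum_j x_j$. A quadratization of $f$ using $m$ auxiliary variables is a polynomial $g(x,y)$ of degree at most $2$ in $x_1,\ldots,x_n,y_1,\ldots,y_m$ such that $f(x)=\min\{g(x,y):y\in\{0,1\}^m\}$ for all $x\in\{0,1\}^n$. It is $y$-linear if it contains no product of two auxiliary variables, i.e. $g(x,y)=q(x)+\sum_{i=1}^m a_i(x)y_i$ with $q$ quadratic and each $a_i$ affine in $x$. *)

(* Coefficients/values in an arbitrary real field R
   (covers the reals of the paper; the statement is purely algebraic). *)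
From HB Require Import structures.
From mathcomp Require Import all_boot all_order all_algebra.
Set Implicit Arguments. Unset Strict Implicit. Unset Printing Implicit Defensive.
Import Order.TTheory GRing.Theory Num.Theory.
Local Open Scope ring_scope.

Definition hweight (n : nat) (x : 'I_n -> bool) : nat := (\sum_(j < n) (x j : nat))%N.

Definition symmetric_pb (R : realFieldType) (n : nat) (f : ('I_n -> bool) -> R) : Prop :=
  forall x x' : 'I_n -> bool, hweight x = hweight x' -> f x = f x'.

Record quadpoly (R : realFieldType) (V : finType) := QPoly {
  qc : R ;
  ql : V -> R ;
  qQ : V -> V -> R }.

Definition qeval (R : realFieldType) (V : finType) (g : quadpoly R V) (z : V -> R) : R :=
  qc g + \sum_(v : V) ql g v * z v + \sum_(v : V) \sum_(w : V) qQ g v w * z v * z w.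

Definition xy_point (R : realFieldType) (n m : nat) (x : 'I_n -> bool) (y : 'I_m -> bool)
  : 'I_n + 'I_m -> R :=
  fun v => match v with inl j => (x j)%:R | inr i => (y i)%:R end.

Definition is_quadratization (R : realFieldType) (n m : nat) (f : ('I_n -> bool) -> R)
  (g : quadpoly R ('I_n + 'I_m)%type) : Prop :=
  forall x : 'I_n -> bool,
    (forall y : 'I_m -> bool, f x <= qeval g ((@xy_point R n m x y))) /\
    (exists y : 'I_m -> bool, qeval g ((@xy_point R n m x y)) = f x).

Definition y_linear (R : realFieldType) (n m : nat) (g : quadpoly R ('I_n + 'I_m)%type) : Prop :=
  forall i k : 'I_m, qQ g (inr i) (inr k) = 0.

(* Writing w for the Hamming weight, a symmetric f is a function F of w on
   {0, ..., n}. Choose 2C to be the largest second difference of F; then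
   F(w) = A + B w + C w^2 - sum_i d_i (w - t_i)_+ with d_i = 2C - (second
   difference at t_i - 1) >= 0, where the hinge at the maximising point has
   weight 0, leaving n - 2 hinges. Each negated hinge is linear in one
   auxiliary bit: -d (w - t)_+ = min_{y in {0,1}} d (t - w) y, and the
   quadratic part in w = sum_j x_j is quadratic in x. *)
From HB Require Import structures.
From mathcomp Require Import all_boot all_order all_algebra.
From mathcomp Require Import ring zify.
Set Implicit Arguments. Unset Strict Implicit. Unset Printing Implicit Defensive.
Import Order.TTheory GRing.Theory Num.Theory.
Local Open Scope ring_scope.

Section SecondDifference.

Context {R : realFieldType}.
Implicit Types (F G : nat -> R) (k t : nat).

Definition second_diff F k : R := F k.+2 - 2 * F k.+1 + F k.

Lemma second_diff_sqr k : second_diff (fun k => k%:R ^+ 2) k = 2.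
Proof. by rewrite /second_diff -!natr1; ring. Qed.

(* [(k - t)%N] is the hinge (k - t)_+, thanks to truncated subtraction. *)
Lemma second_diff_hinge t k :
  second_diff (fun k => (k - t)%:R) k = (t == k.+1)%:R.
Proof.
rewrite /second_diff; case: (ltngtP t k.+1) => htk.
- by rewrite !natrB; try lia; rewrite -!natr1 /=; ring.
- have /eqP-> : (k.+2 - t == 0)%N by rewrite subn_eq0.
  have /eqP-> : (k.+1 - t == 0)%N by rewrite subn_eq0 ltnW.
  have /eqP-> : (k - t == 0)%N by rewrite subn_eq0 ltnW // ltnW.
  by rewrite /=; ring.
- have /eqP-> : (k - t == 0)%N by rewrite htk subn_eq0.
  by rewrite htk subSnn subnn /=; ring.
Qed.

Lemma second_diff_sum (N : nat) (e : 'I_N -> R) (h : 'I_N -> nat -> R) k :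
  second_diff (fun k => \sum_(j < N) e j * h j k) k
  = \sum_(j < N) e j * second_diff (h j) k.
Proof.
rewrite /second_diff mulr_sumr -sumrB -big_split /=.
by apply: eq_bigr => j _; ring.
Qed.

Lemma eq_from_second_diff (N : nat) F G :
  F 0 = G 0 -> F 1 = G 1 ->
  (forall k, (k < N)%N -> second_diff F k = second_diff G k) ->
  forall k, (k <= N.+1)%N -> F k = G k.
Proof.
move=> FG0 FG1 dFG.
suff FG2 k : (k <= N)%N -> F k = G k /\ F k.+1 = G k.+1.
  by case=> [|k] hk; [case: (FG2 0%N isT) | case: (FG2 k hk)].
elim: k => [|k IH] hk; first by [].
have [FGk FGk1] := IH (ltnW hk); split=> //.
by have := dFG k hk; rewrite /second_diff FGk FGk1 => /addIr/addIr.
Qed.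

Lemma quad_hinge_repr (N : nat) F (C : R) k : (k <= N.+1)%N ->
  F k = F 0 + (F 1 - F 0 - C) * k%:R + C * k%:R ^+ 2
        - \sum_(j < N) (2 * C - second_diff F j) * (k - j.+1)%:R.
Proof.
pose e (j : 'I_N) := 2 * C - second_diff F j.
pose S k := \sum_(j < N) e j * (k - j.+1)%:R.
rewrite -/(S k); move: k; apply: eq_from_second_diff => [||m hm].
- by rewrite /S big1 => [|j _]; rewrite ?sub0n /=; ring.
- by rewrite /S big1 => [|j _]; rewrite ?subSS ?sub0n /=; ring.
have dS : second_diff S m = e (Ordinal hm).
  rewrite second_diff_sum (bigD1 (Ordinal hm)) //= second_diff_hinge eqxx.
  rewrite big1 ?addr0 ?mulr1 // => j hj.
  by rewrite second_diff_hinge eqSS (negbTE (hj : j != m :> nat)) mulr0.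
have -> : second_diff F m = C * second_diff (fun k => k%:R ^+ 2) m - second_diff S m.
  by rewrite second_diff_sqr dS /e; ring.
by rewrite /second_diff /= -!natr1; ring.
Qed.

Lemma quad_hinge_repr_nonneg (p : nat) F :
  exists (A B C : R) (d : 'I_p -> R) (t : 'I_p -> nat), (forall i, 0 <= d i) /\
    forall k, (k <= p.+2)%N ->
      F k = A + B * k%:R + C * k%:R ^+ 2 - \sum_(i < p) d i * (k - t i)%:R.
Proof.
have [j0 _ maxj0] := @arg_maxP _ R _ ord0 predT (fun j : 'I_p.+1 => second_diff F j) isT.
pose C := second_diff F j0 / 2.
have twoC : 2 * C = second_diff F j0 by rewrite /C mulrC divfK // pnatr_eq0.
exists (F 0), (F 1 - F 0 - C), C,
  (fun i => 2 * C - second_diff F (lift j0 i)), (fun i => (lift j0 i).+1).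
split=> [i | k hk]; first by rewrite twoC subr_ge0; apply: maxj0.
by rewrite (quad_hinge_repr F C hk) (bigD1_ord j0) //= twoC subrr mul0r add0r.
Qed.

End SecondDifference.

Lemma hweight_le (n : nat) (x : 'I_n -> bool) : (hweight x <= n)%N.
Proof.
rewrite /hweight -[n in (_ <= n)%N]card_ord -sum1_card.
by apply: leq_sum => j _; apply: leq_b1.
Qed.

Lemma hweight_prefix (n k : nat) : hweight (fun j : 'I_n => (j < k)%N) = minn k n.
Proof.
rewrite /hweight; elim: n => [|n IH]; first by rewrite big_ord0 minn0.
by rewrite big_ord_recr /= IH; case: (ltnP n k) => /=; lia.
Qed.

Lemma symmetric_pb_hweight (R : realFieldType) (n : nat) (f : ('I_n -> bool) -> R) :
  symmetric_pb f -> forall x, f x = f (fun j => (j < hweight x)%N).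
Proof.
by move=> symf x; apply: symf; rewrite hweight_prefix; apply/esym/minn_idPl/hweight_le.
Qed.

Section HingeQuadratization.

Context {R : realFieldType}.

Lemma opp_hinge_le (d : R) (k t : nat) (b : bool) : 0 <= d ->
  - (d * (k - t)%:R) <= d * (t%:R - k%:R) * b%:R.
Proof.
move=> d_ge0; case: b; last by rewrite mulr0 oppr_le0 mulr_ge0.
rewrite mulr1; case: (leqP t k) => htk; first by rewrite natrB // -mulrN opprB.
have /eqP-> : (k - t == 0)%N by rewrite subn_eq0 ltnW.
by rewrite mulr0 oppr0 mulr_ge0 // subr_ge0 ler_nat ltnW.
Qed.

Lemma opp_hinge_eq (d : R) (k t : nat) :
  - (d * (k - t)%:R) = d * (t%:R - k%:R) * (t < k)%N%:R.
Proof.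
case: (ltnP t k) => htk; first by rewrite mulr1 natrB 1?ltnW // -mulrN opprB.
have /eqP-> : (k - t == 0)%N by rewrite subn_eq0.
by rewrite !mulr0 oppr0.
Qed.

Definition hinge_qpoly (n : nat) {p : nat} (A B C : R) (d : 'I_p -> R) (t : 'I_p -> nat)
  : quadpoly R ('I_n + 'I_p)%type :=
  QPoly A (fun v => if v is inr i then d i * (t i)%:R else B)
    (fun v w => match v, w with
                | inl _, inl _ => C | inl _, inr i => - d i | _, _ => 0 end).

Lemma qeval_hinge_qpoly (n p : nat) A B C (d : 'I_p -> R) (t : 'I_p -> nat)
    (x : 'I_n -> bool) (y : 'I_p -> bool) :
  qeval (hinge_qpoly n A B C d t) (xy_point R x y) =
  A + B * (hweight x)%:R + C * (hweight x)%:R ^+ 2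
    + \sum_(i < p) d i * ((t i)%:R - (hweight x)%:R) * (y i)%:R.
Proof.
have -> : (hweight x)%:R = \sum_(j < n) (x j)%:R :> R by rewrite natr_sum.
set w := \sum_(j < n) _.
rewrite /qeval /= !big_sumType /= [X in _ + (_ + X)]big1; last first.
  by move=> i _; rewrite big1 // => j _; rewrite !mul0r.
rewrite addr0 (eq_bigr _ (fun j _ => big_sumType _ _ _)) /= big_split /=.
have quad : \sum_(i < n) \sum_(j < n) C * (x i)%:R * (x j)%:R = C * w ^+ 2.
  rewrite expr2 /w mulr_suml mulr_sumr; apply: eq_bigr => i _.
  by rewrite !mulr_sumr; apply: eq_bigr => j _; ring.
have mixed : \sum_(i < n) \sum_(j < p) - d j * (x i)%:R * (y j)%:R
             = \sum_(j < p) - d j * w * (y j)%:R.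
  rewrite exchange_big /=; apply: eq_bigr => j _.
  by rewrite /w mulr_sumr mulr_suml; apply: eq_bigr => i _; ring.
rewrite -mulr_sumr -/w quad mixed.
have -> : \sum_(i < p) d i * ((t i)%:R - w) * (y i)%:R =
  \sum_(i < p) d i * (t i)%:R * (y i)%:R + \sum_(i < p) - d i * w * (y i)%:R.
  by rewrite -big_split; apply: eq_bigr => i _ /=; ring.
ring.
Qed.

Lemma hinge_qpoly_quadratization (n p : nat) (f : ('I_n -> bool) -> R) A B C
    (d : 'I_p -> R) (t : 'I_p -> nat) :
  (forall i, 0 <= d i) ->
  (forall x, f x = A + B * (hweight x)%:R + C * (hweight x)%:R ^+ 2
                   - \sum_(i < p) d i * (hweight x - t i)%:R) ->
  is_quadratization f (hinge_qpoly n A B C d t).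
Proof.
move=> d_ge0 fE x; rewrite fE; split=> [y|].
  rewrite qeval_hinge_qpoly -sumrN lerD2l; apply: ler_sum => i _.
  exact: opp_hinge_le.
exists (fun i => (t i < hweight x)%N).
rewrite qeval_hinge_qpoly -sumrN; congr (_ + _).
by apply: eq_bigr => i _; rewrite opp_hinge_eq.
Qed.

End HingeQuadratization.

Theorem theorem4 (R : realFieldType) (n : nat) (hn : (2 <= n)%N)
  (f : ('I_n -> bool) -> R) (hf : symmetric_pb f) :
  exists m : nat, (m <= n - 2)%N /\
    exists g : quadpoly R ('I_n + 'I_m)%type, y_linear g /\ is_quadratization f g.
Proof.
case: n hn f hf => [|[|p]] // _ f symf.
pose F k := f (fun j : 'I_p.+2 => (j < k)%N).
have [A [B [C [d [t [d_ge0 FE]]]]]] := quad_hinge_repr_nonneg p F.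
exists p; split; first by rewrite subn2.
exists (hinge_qpoly p.+2 A B C d t); split; first by [].
apply: hinge_qpoly_quadratization d_ge0 _ => x.
by rewrite (symmetric_pb_hweight symf) -FE // hweight_le.
Qed.
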